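(* Let $V$ be an $n$-dimensional real inner product space, $r\ge0$, and $P$ a monopolar $k$-chain in $V$. Then $|\perp P|^{\natural_r}=|P|^{\natural_r}$.
   Context: For a simple $k$-vector $\alpha=w_1\wedge\dots\wedge w_k$, $M(\alpha)=\sqrt{\det\langle w_i,w_j\rangle}$. For simple $\alpha$, $\perp\alpha$ is the simple $(n-k)$-vector with $M(\perp\alpha)=M(\alpha)$ whose subspace is the orthogonal complement of the span of $\alpha$, oriented so that $\alpha\wedge\perp\alpha$ is a positive multiple of $e_1\wedge\dots\wedge e_n$ for a fixed oriented orthonormal basis; $\perp$ is extended linearly. A monopolar $k$-chain is a finite formal sum $P=\sum_i(p_i;\alpha_i)$, linear in the second slot at each point; $\perp P=\sum_i(p_i;\perp\alpha_i)$. $T_u(p;\alpha)=(p+u;\alpha)$, $\Delta_u=T_u-\mathrm{id}$, $\Delta^j_U=\Delta_{u_1}\circ\dots\circ\Delta_{u_j}$, $\|\Delta^j_U(p;\alpha)\|_j=|u_1|\cdots|u_j|M(\alpha)$. A $k$-form is a linear functional $\omega$ on monopolar $k$-chains; $\|\omega\|_0=\sup\{|\omega(p;\alpha)|:\alpha$ simple, $M(\alpha)=1\}$, $\|\omega\|_j=\sup\{|\omega(\Delta^j_U(p;\alpha))|:\|\Delta^j_U(p;\alpha)\|_j=1\}$, $|\omega|^{\natural_r}=\max_{0\le j\le r}\|\omega\|_j$, $\mathcal B_k^r$ = forms with finite norm. For a monopolar $m$-chain $Q$, $|Q|^{\natural_r}=\sup_{0\ne\omega\in\mathcal B_m^r}\omega(Q)/|\omega|^{\natural_r}$.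 *)

From HB Require Import structures.
From mathcomp Require Import all_boot all_order all_algebra.
From mathcomp Require Import all_classical all_reals ereal.
From Stdlib Require Import ClassicalEpsilon.

Set Implicit Arguments.
Unset Strict Implicit.
Unset Printing Implicit Defensive.

Import Order.TTheory GRing.Theory Num.Theory.
Local Open Scope ring_scope.

(* Index set of the standard basis of Lambda_k(R^n): k-subsets of 'I_n.
   e_S = e_{s_1} /\ ... /\ e_{s_k} with s_1 < ... < s_k. *)
Notation ksub n k := {S : {set 'I_n} | #|S| == k}.

(* k-vectors in R^n: coordinates on the basis e_S. *)
Notation kvec R n k := {ffun ksub n k -> R^o}.

Section Chains.
Variable R : realType.

(* Points of V = R^n (standard inner product <u,v> = u *m v^T). *)
Local Notation pt n := 'rV[R]_n.
Local Notation kvec n k := (kvec R n k).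

Definition enorm (n : nat) (u : pt n) : R := Num.sqrt ((u *m u^T) 0 0).

(* increasing enumeration of S, as a map 'I_k -> 'I_n *)
Definition kenum (n k : nat) (S : ksub n k) (j : 'I_k) : 'I_n :=
  enum_val (cast_ord (esym (eqP (valP S))) j).

(* w_1 /\ ... /\ w_k where w_i is the i-th row of W. *)
Definition wedge (n k : nat) (W : 'M[R]_(k, n)) : kvec n k :=
  [ffun S => \det (colsub (@kenum n k S) W)].

(* A simple k-vector is c *: (w_1 /\ ... /\ w_k); the scalar c only matters for
   k = 0 (where every scalar is a simple 0-vector).  Its mass:
   M(c w_1/\.../\w_k) = |c| sqrt(det <w_i,w_j>). *)
Definition smass (n k : nat) (c : R) (W : 'M[R]_(k, n)) : R :=
  `|c| * Num.sqrt (\det (W *m W^T)).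

(* Specification of the operator perp : Lambda_k -> Lambda_{n-k}: linear, and on
   every nonzero simple k-vector alpha it returns a simple (n-k)-vector whose
   vectors are orthogonal to those of alpha (hence span the orthogonal complement,
   since the mass is nonzero), with the same mass, and with alpha /\ perp alpha a
   positive multiple of e_1 /\ ... /\ e_n. *)
Definition perp_spec (n k : nat) (hk : (k <= n)%N)
  (L : kvec n k -> kvec n (n - k)%N) : Prop :=
  (forall (a : R) (x y : kvec n k), L (a *: x + y) = a *: L x + L y) /\
  forall (c : R) (W : 'M[R]_(k, n)), c *: wedge W != 0 ->
    exists (d : R) (V : 'M[R]_(n - k, n)),
      [/\ L (c *: wedge W) = d *: wedge V,
          W *m V^T = 0,
          smass d V = smass c W &
          0 < c * d * \det (castmx (subnKC hk, erefl n) (col_mx W V))].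

Definition perp (n k : nat) (hk : (k <= n)%N) : kvec n k -> kvec n (n - k)%N :=
  epsilon (inhabits (fun _ => 0)) (@perp_spec n k hk).

(* Monopolar k-chains: finite formal sums sum_i (p_i; alpha_i). *)
Definition chain (n k : nat) := seq ('rV[R]_n * {ffun ksub n k -> R^o}).

Definition perp_chain (n k : nat) (hk : (k <= n)%N) (P : chain n k)
  : chain n (n - k)%N := [seq (x.1, perp hk x.2) | x <- P].

(* Delta_u = T_u - id on chains *)
Definition Delta (n k : nat) (u : pt n) (P : chain n k) : chain n k :=
  [seq (x.1 + u, x.2) | x <- P] ++ [seq (x.1, - x.2) | x <- P].

Definition DeltaU (n k : nat) (U : seq (pt n)) (P : chain n k) : chain n k :=
  foldr (@Delta n k) P U.

(* k-forms: linear functionals on monopolar k-chains, i.e. functions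
   omega(p; alpha) linear in alpha, extended additively to formal sums. *)
Definition is_form (n k : nat) (w : pt n -> kvec n k -> R) : Prop :=
  forall p (a : R) (x y : kvec n k), w p (a *: x + y) = a * w p x + w p y.

Definition eval (n k : nat) (w : pt n -> kvec n k -> R) (P : chain n k) : R :=
  \sum_(x <- P) w x.1 x.2.

Definition normj (n k : nat) (w : pt n -> kvec n k -> R) (j : nat) : \bar R :=
  ereal_sup [set z | exists (U : seq (pt n)) (p : pt n) (c : R) (W : 'M[R]_(k, n)),
    [/\ size U = j,
        (\prod_(u <- U) enorm u) * smass c W = 1 &
        z = (`| eval w (DeltaU U [:: (p, c *: wedge W)]) |)%:E]].

Definition natnorm_form (n k r : nat) (w : pt n -> kvec n k -> R) : \bar R :=
  \big[maxe/-oo%E]_(j < r.+1) normj w j.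

Definition natnorm_chain (n k r : nat) (Q : chain n k) : \bar R :=
  ereal_sup [set z | exists w : pt n -> kvec n k -> R,
    [/\ is_form w, w <> (fun _ _ => 0),
        (natnorm_form r w < +oo)%E &
        z = (eval w Q / fine (natnorm_form r w))%:E]].

End Chains.

From Pilot Require Import Defs.
From HB Require Import structures.
From mathcomp Require Import all_boot all_order all_algebra.
From mathcomp Require Import all_classical all_reals ereal.
From mathcomp Require Import ring zify.
From Stdlib Require Import ClassicalEpsilon.

(* The operator [perp] is the Hodge star [hodge], (hodge x)_T = +-x_{T^c}.
   Indeed, if alpha = c w_1/\.../\w_k is simple and nonzero, both perp alpha
   and hodge alpha are multiples of v_1/\.../\v_{n-k} for any basis v of the
   orthogonal complement of the w_i; equality of masses fixes the modulus of
   the multiple and the orientation condition fixes its sign.  Since the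
   basis vectors e_S are simple, linearity gives perp = hodge.
   The Hodge star is a linear bijection which maps nonzero simple vectors
   onto nonzero simple vectors of the same mass, and so does its inverse.
   Pulling forms back along it is thus a bijection from (n-k)-forms to
   k-forms preserving every seminorm ||.||_j, with w(perp P) equal to the
   pulled back form evaluated at P: the suprema defining |perp P| and |P|
   range over the same set. *)

Set Implicit Arguments.
Unset Strict Implicit.
Unset Printing Implicit Defensive.
Import Order.TTheory GRing.Theory Num.Theory.
Local Open Scope ring_scope.

Section KSubsets.
Variables n k : nat.
Implicit Type S : ksub n k.

Lemma kenum_in S i : kenum S i \in val S.
Proof. exact: enum_valP. Qed.

Lemma kenum_inj S : injective (kenum S).
Proof. by move=> i j /enum_val_inj /cast_ord_inj. Qed.

Lemma kenum_onto S j : j \in val S -> exists i, kenum S i = j.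
Proof.
move=> Sj; exists (cast_ord (eqP (valP S)) (enum_rank_in Sj j)).
by rewrite /kenum cast_ordK enum_rankK_in.
Qed.

End KSubsets.

Lemma card_ksubC n k m (e : (k + m = n)%N) (T : ksub n m) : #|~: val T| == k.
Proof.
have := cardsC (val T); rewrite card_ord (eqP (valP T)); lia.
Qed.

Definition ksubC n k m (e : (k + m = n)%N) (T : ksub n m) : ksub n k :=
  exist _ (~: val T) (card_ksubC e T).

Lemma ksubCK n k m (e : (k + m = n)%N) (e' : (m + k = n)%N) (S : ksub n k) :
  ksubC e (ksubC e' S) = S.
Proof. by apply: val_inj; rewrite /= finset.setCK. Qed.

Section BasisRows.
Variable R : nzRingType.

Definition basis_rows n q (S : ksub n q) : 'M[R]_(q, n) :=
  \matrix_(i, j) (kenum S i == j)%:R.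

Lemma mulmx_tr_basis_rows n q p (X : 'M[R]_(p, n)) (S : ksub n q) :
  X *m (basis_rows S)^T = colsub (kenum S) X.
Proof.
apply/matrixP => i l; rewrite !mxE (bigD1 (kenum S l)) //= !mxE eqxx mulr1.
by rewrite big1 ?addr0 // => j /negbTE jl; rewrite !mxE eq_sym jl mulr0.
Qed.

Lemma basis_rows_orthonormal n q (S : ksub n q) :
  basis_rows S *m (basis_rows S)^T = 1%:M.
Proof.
by apply/matrixP => i j; rewrite mulmx_tr_basis_rows !mxE (inj_eq (@kenum_inj _ _ S)).
Qed.

Lemma basis_rows_orthoC n q p (S : ksub n q) (T : ksub n p) :
  val T = ~: val S -> basis_rows S *m (basis_rows T)^T = 0.
Proof.
move=> TSC; apply/matrixP => i j; rewrite mulmx_tr_basis_rows !mxE.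
by case: eqP => // Sij; move: (kenum_in S i) (kenum_in T j); rewrite Sij TSC inE => ->.
Qed.

Lemma colsub_basis_rowsE n q t p (X : 'M[R]_(p, n)) (S : ksub n q) (T : ksub n t) :
  val T = ~: val S ->
  X = colsub (kenum S) X *m basis_rows S + colsub (kenum T) X *m basis_rows T.
Proof.
move=> TSC; apply/matrixP => i j; rewrite !mxE.
have sum_kenum q' (S' : ksub n q') :
    \sum_l colsub (kenum S') X i l * basis_rows S' l j = (j \in val S')%:R * X i j.
  case: (boolP (j \in val S')) => [S'j | S'Nj].
    have [l0 <-] := kenum_onto S'j.
    rewrite (bigD1 l0) //= !mxE eqxx mulr1 mul1r big1 ?addr0 // => l l0l.
    by rewrite !mxE (inj_eq (@kenum_inj _ _ S')) (negbTE l0l) mulr0.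
  rewrite mul0r big1 // => l _; rewrite !mxE.
  case: eqP => [lj|]; last by rewrite mulr0.
  by move: (kenum_in S' l); rewrite lj (negbTE S'Nj).
by rewrite !sum_kenum TSC inE; case: (j \in val S); rewrite ?mul1r ?mul0r ?addr0 ?add0r.
Qed.

End BasisRows.

Lemma unitmx_mulmx_row_free (R : fieldType) p n (X : 'M[R]_(p, n)) (Y : 'M[R]_(n, p)) :
  X *m Y \in unitmx -> row_free X.
Proof.
rewrite -row_free_unit => /eqP rk.
by rewrite /row_free eqn_leq rank_leq_row -{1}rk mxrankM_maxl.
Qed.

Lemma basis_rows_free (R : fieldType) n q (S : ksub n q) : row_free (basis_rows R S).
Proof.
apply: (@unitmx_mulmx_row_free _ _ _ _ (basis_rows R S)^T).
by rewrite basis_rows_orthonormal unitmx1.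
Qed.

Section Gram.
Variable R : realFieldType.

Definition posdef p (G : 'M[R]_p) :=
  forall x : 'rV_p, x != 0 -> 0 < (x *m G *m x^T) 0 0.

Lemma schur_congruence p (a : R) (b : 'rV[R]_p) (D : 'M[R]_p) : a != 0 ->
  let L := block_mx 1 0 (- (a^-1 *: b^T)) 1 in
  L *m block_mx a%:M b b^T D *m L^T = block_mx a%:M 0 0 (D - a^-1 *: (b^T *m b)).
Proof.
move=> a0 L; rewrite /L mulmx_block !mul1mx !mul0mx !addr0 tr_block_mx !trmx1 !trmx0.
rewrite mulmx_block !mulmx1 !mulmx0 ?addr0 ?add0r.
have e1 : - (a^-1 *: b^T) *m a%:M + b^T = 0.
  by rewrite mulNmx mul_mx_scalar scalerA mulfV // scale1r addNr.
have e2 : a%:M *m (- (a^-1 *: b^T))^T + b = 0.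
  rewrite mul_scalar_mx linearN /= linearZ /= trmxK scalerN scalerA mulfV //.
  by rewrite scale1r addNr.
by rewrite e1 e2 mul0mx add0r mulNmx -scalemxAl addrC.
Qed.

Lemma posdef_det_gt0 p (G : 'M[R]_p) : G^T = G -> posdef G -> 0 < \det G.
Proof.
elim: p G => [|p IH] G Gsym Gpos; first by rewrite det_mx00.
pose G' : 'M[R]_(1 + p) := G; have G'pos : posdef G' := Gpos.
pose a := ulsubmx G' 0 0; pose b := ursubmx G'; pose D := drsubmx G'.
have G'E : G' = block_mx a%:M b b^T D.
  rewrite -[G' in LHS]submxK -mx11_scalar; congr block_mx.
  by rewrite /b trmx_ursub /G' Gsym.
have a_gt0 : 0 < a.
  have x0 : row_mx 1 0 != 0 :> 'rV[R]_(1 + p) by rewrite row_mx_eq0 negb_and oner_eq0.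
  have := G'pos _ x0; rewrite G'E tr_row_mx mul_row_block mul_row_col.
  by rewrite !mul0mx !mul1mx !addr0 trmx0 trmx1 mulmx1 mulmx0 addr0 mxE eqxx.
have a0 : a != 0 by rewrite gt_eqF.
move: (schur_congruence b D a0) => /=; rewrite -G'E.
set L := block_mx _ _ _ _; set S := D - _ => LG.
have detL : \det L = 1 by rewrite det_lblock !det1 mulr1.
have -> : \det G = a * \det S.
  have := congr1 determinant LG; rewrite !det_mulmx det_tr detL mul1r mulr1.
  by rewrite det_ublock det_scalar1.
rewrite mulr_gt0 // IH //.
  have DT : D^T = D by rewrite /D trmx_drsub /G' Gsym.
  by rewrite /S linearD /= DT linearN /= linearZ /= trmx_mul trmxK.
move=> y y0; have Lfree : row_free L by rewrite row_free_unit unitmxE detL unitr1.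
have x0 : row_mx 0 y *m L != 0 by rewrite mulmx_free_eq0 // row_mx_eq0 negb_and y0 orbT.
have := G'pos _ x0; rewrite trmx_mul !mulmxA.
have -> : row_mx 0 y *m L *m G' *m L^T = row_mx 0 y *m (L *m G' *m L^T).
  by rewrite !mulmxA.
rewrite LG mul_row_block !mulmx0 !mul0mx !addr0 !add0r tr_row_mx trmx0.
by rewrite mul_row_col mul0mx add0r.
Qed.

Lemma gram_det_gt0 n p (X : 'M[R]_(p, n)) : row_free X -> 0 < \det (X *m X^T).
Proof.
move=> Xfree; apply: posdef_det_gt0; first by rewrite trmx_mul trmxK.
move=> x x0; rewrite mulmxA -mulmxA -trmx_mul.
have : x *m X != 0 by rewrite mulmx_free_eq0.
move: (x *m X) => u u0; rewrite mxE.
have [j uj] : exists j, u 0 j != 0.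
  apply/existsP; apply: contraR u0 => /existsPn uN0; apply/eqP/rowP => j.
  by rewrite mxE; apply/eqP; have := uN0 j; rewrite negbK.
rewrite (bigD1 j) //= mxE ltr_pwDl //.
  by rewrite -expr2 lt_def sqrf_eq0 uj sqr_ge0.
by apply: sumr_ge0 => i _; rewrite mxE -expr2 sqr_ge0.
Qed.

Lemma gram_det_ge0 n p (X : 'M[R]_(p, n)) : 0 <= \det (X *m X^T).
Proof.
have [/gram_det_gt0/ltW // | Xnfree] := boolP (row_free X).
suff /eqP -> : \det (X *m X^T) == 0 by [].
by apply: contraNT Xnfree; rewrite -unitfE -unitmxE => /unitmx_mulmx_row_free.
Qed.
End Gram.

Definition stackmx (R : Type) k m n (e : (k + m = n)%N)
    (W : 'M[R]_(k, n)) (V : 'M[R]_(m, n)) : 'M[R]_n :=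
  castmx (e, erefl n) (col_mx W V).

Lemma det_stackmx_orth_sqr (R : comNzRingType) k m n (e : (k + m = n)%N)
    (W : 'M[R]_(k, n)) (V : 'M[R]_(m, n)) : W *m V^T = 0 ->
  \det (stackmx e W V) ^+ 2 = \det (W *m W^T) * \det (V *m V^T).
Proof.
rewrite /stackmx; case: n / e W V => W V WV; rewrite castmx_id expr2 -{2}det_tr.
by rewrite -det_mulmx tr_col_mx mul_col_mx !mul_mx_row WV -block_mxEv det_lblock.
Qed.

Lemma mulmx_tr_eq0C (R : comNzRingType) p q n (X : 'M[R]_(p, n)) (Y : 'M[R]_(q, n)) :
  X *m Y^T = 0 -> Y *m X^T = 0.
Proof. by move=> XY; rewrite -[Y]trmxK -trmx_mul XY trmx0. Qed.

Lemma exists_orthocomplement (R : fieldType) n p q (X : 'M[R]_(p, n)) :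
  (p + q = n)%N -> row_free X -> exists2 Y : 'M[R]_(q, n), X *m Y^T = 0 & row_free Y.
Proof.
move=> e Xfree; have rk : \rank (kermx X^T) = q.
  by rewrite mxrank_ker mxrank_tr (eqP Xfree) -e addKn.
have XY : row_base (kermx X^T) *m X^T = 0 by apply/sub_kermxP; rewrite eq_row_base.
move: (row_base (kermx X^T)) XY (row_base_free (kermx X^T)); rewrite rk => Y YX Yfree.
by exists Y => //; apply: mulmx_tr_eq0C.
Qed.

Section RealField.
Variable R : realFieldType.

Lemma gram_unitmx n p (X : 'M[R]_(p, n)) : row_free X -> X *m X^T \in unitmx.
Proof. by move=> /gram_det_gt0 gt0; rewrite unitmxE unitfE gt_eqF. Qed.

Lemma det_stackmx_orth_neq0 k m n (e : (k + m = n)%N)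
    (W : 'M[R]_(k, n)) (V : 'M[R]_(m, n)) :
  row_free W -> row_free V -> W *m V^T = 0 -> \det (stackmx e W V) != 0.
Proof.
rewrite /stackmx; case: n / e W V => W V Wfree Vfree WV; rewrite castmx_id.
rewrite -unitfE -unitmxE -row_free_unit -kermx_eq0; apply/rowV0P => x.
move/sub_kermxP; rewrite -[x]hsubmxK mul_row_col => x0.
have VW := mulmx_tr_eq0C WV.
have /eqP : lsubmx x *m (W *m W^T) = 0.
  by have := congr1 (mulmx^~ W^T) x0; rewrite mulmxDl -!mulmxA VW mulmx0 addr0 mul0mx.
rewrite mulmx_free_eq0 ?row_free_unit ?gram_unitmx // => /eqP xl0.
move/eqP: x0; rewrite xl0 mul0mx add0r mulmx_free_eq0 // => /eqP ->.
by rewrite row_mx0.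
Qed.

End RealField.

Lemma det_stackmx_basis_rowsC (R : comNzRingType) k m n (e : (k + m = n)%N)
    (W : 'M[R]_(k, n)) (S : ksub n k) (T : ksub n m) : val S = ~: val T ->
  \det (stackmx e W (basis_rows R T)) =
  \det (colsub (kenum S) W) * \det (stackmx e (basis_rows R S) (basis_rows R T)).
Proof.
rewrite /stackmx; case: n / e W S T => W S T SE; rewrite !castmx_id.
have TE : val T = ~: val S by rewrite SE finset.setCK.
rewrite {1}(colsub_basis_rowsE W TE).
set WS := colsub _ W; set WT := colsub _ W.
have -> : col_mx (WS *m basis_rows R S + WT *m basis_rows R T) (basis_rows R T) =
    block_mx WS WT 0 1 *m col_mx (basis_rows R S) (basis_rows R T).
  by rewrite mul_block_col mul0mx mul1mx add0r.
by rewrite det_mulmx det_ublock det1 mulr1.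
Qed.

Lemma det_stackmx_basis_rows (R : fieldType) k m n (e : (k + m = n)%N)
    (W : 'M[R]_(k, n)) (V : 'M[R]_(m, n)) (T : ksub n m) :
  W *m V^T = 0 -> V *m V^T \in unitmx ->
  \det (stackmx e W (basis_rows R T)) * \det (stackmx e W V) =
  \det (W *m W^T) * \det (colsub (kenum T) V).
Proof.
rewrite /stackmx; case: n / e W V T => W V T WV Vunit; rewrite !castmx_id.
pose H := invmx (V *m V^T).
have detH : \det H != 0 by rewrite det_inv invr_eq0 -unitfE -unitmxE.
have HT : H^T = H by rewrite /H trmx_inv trmx_mul trmxK.
have prodE : col_mx W (basis_rows R T) *m row_mx W^T (V^T *m H) =
    block_mx (W *m W^T) 0 (basis_rows R T *m W^T) (basis_rows R T *m (V^T *m H)).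
  by rewrite mul_col_mx !mul_mx_row mulmxA WV mul0mx -block_mxEv.
have detTH : \det (basis_rows R T *m (V^T *m H)) = \det (colsub (kenum T) V) * \det H.
  by rewrite mulmxA det_mulmx -mulmx_tr_basis_rows -det_tr trmx_mul trmxK.
have detWVH : \det (row_mx W^T (V^T *m H)) = \det H * \det (col_mx W V).
  rewrite -det_tr tr_row_mx trmxK trmx_mul HT trmxK.
  have -> : col_mx W (H *m V) = block_mx 1 0 0 H *m col_mx W V.
    by rewrite mul_block_col !mul1mx !mul0mx addr0 add0r.
  by rewrite det_mulmx det_ublock det1 mul1r.
have := congr1 determinant prodE; rewrite det_mulmx det_lblock detTH detWVH => E.
by apply: (mulIf detH); rewrite -!mulrA [\det (col_mx W V) * _]mulrC E.
Qed.

Section HodgeStar.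
Variable R : realFieldType.
Variables k m n : nat.
Variable e : (k + m = n)%N.

(* The sign of the permutation listing [T^c] and then [T] in increasing order. *)
Definition hodge_sign (T : ksub n m) : R :=
  \det (stackmx e (basis_rows R (ksubC e T)) (basis_rows R T)).

Lemma hodge_sign_neq0 T : hodge_sign T != 0.
Proof.
apply: det_stackmx_orth_neq0; rewrite ?basis_rows_free //.
by apply: basis_rows_orthoC; rewrite /= finset.setCK.
Qed.

Definition hodge (x : kvec R n k) : kvec R n m :=
  [ffun T => x (ksubC e T) * hodge_sign T].

Lemma hodge_is_linear : linear hodge.
Proof. by move=> a x y; apply/ffunP => T; rewrite !ffunE mulrDl -scalerAl. Qed.

HB.instance Definition _ :=
  GRing.isLinear.Build R (kvec R n k) (kvec R n m) _ hodge hodge_is_linear.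

Variable e' : (m + k = n)%N.

Definition hodge_inv (y : kvec R n m) : kvec R n k :=
  [ffun S => y (ksubC e' S) / hodge_sign (ksubC e' S)].

Lemma hodge_inv_is_linear : linear hodge_inv.
Proof. by move=> a x y; apply/ffunP => S; rewrite !ffunE mulrDl -scalerAl. Qed.

HB.instance Definition _ :=
  GRing.isLinear.Build R (kvec R n m) (kvec R n k) _ hodge_inv hodge_inv_is_linear.

Lemma hodgeK : cancel hodge hodge_inv.
Proof. by move=> x; apply/ffunP => S; rewrite !ffunE ksubCK mulfK ?hodge_sign_neq0. Qed.

Lemma hodge_invK : cancel hodge_inv hodge.
Proof. by move=> y; apply/ffunP => T; rewrite !ffunE ksubCK divfK ?hodge_sign_neq0. Qed.

End HodgeStar.

Definition simple_mass_preserving (R : realType) n k m (L : kvec R n k -> kvec R n m) :=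
  forall c (W : 'M[R]_(k, n)), c *: wedge W != 0 ->
    exists d (V : 'M[R]_(m, n)),
      L (c *: wedge W) = d *: wedge V /\ smass d V = smass c W.

Section SimpleVectors.
Variable R : realType.

Lemma wedge_neq0_row_free n k (W : 'M[R]_(k, n)) : wedge W != 0 -> row_free W.
Proof.
apply: contraR => Wnfree; apply/eqP/ffunP => S; rewrite !ffunE -mulmx_tr_basis_rows.
by apply/eqP; apply: contraR Wnfree; rewrite -unitfE -unitmxE => /unitmx_mulmx_row_free.
Qed.

Lemma scale_wedge_neq0 n k (c : R) (W : 'M[R]_(k, n)) :
  c *: wedge W != 0 -> c != 0 /\ row_free W.
Proof.
rewrite scaler_eq0 negb_or => /andP[c0 /wedge_neq0_row_free Wfree]; exact: conj.
Qed.

Lemma wedge_basis_rows n k (S : ksub n k) :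
  wedge (basis_rows R S) = [ffun S' => (S' == S)%:R].
Proof.
apply/ffunP => S'; rewrite !ffunE -mulmx_tr_basis_rows.
have [-> | S'S] := eqVneq S' S; first by rewrite basis_rows_orthonormal det1.
have [j S'j Sj] : exists2 j, j \in val S' & j \notin val S.
  apply/subsetPn; apply: contra S'S => S'sub; apply/eqP/val_inj/setP/subset_cardP => //.
  by rewrite (eqP (valP S)) (eqP (valP S')).
have [l Sl] := kenum_onto S'j.
rewrite -det_tr; apply/eqP/det0P; exists (delta_mx 0 l).
  by apply/eqP => /matrixP /(_ 0 l) /eqP; rewrite !mxE !eqxx oner_eq0.
rewrite -rowE mulmx_tr_basis_rows; apply/rowP => i; rewrite !mxE Sl.
by case: eqP => // Sij; move: (kenum_in S i); rewrite Sij (negbTE Sj).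
Qed.

Lemma hodge_wedge k m n (e : (k + m = n)%N) (W : 'M[R]_(k, n)) (V : 'M[R]_(m, n)) :
  W *m V^T = 0 -> \det (stackmx e W V) != 0 ->
  hodge e (wedge W) = (\det (W *m W^T) / \det (stackmx e W V)) *: wedge V.
Proof.
move=> WV; set a := \det _ => a0.
have Vunit : V *m V^T \in unitmx.
  rewrite unitmxE unitfE; apply: contra a0 => /eqP VV0.
  by rewrite -sqrf_eq0 det_stackmx_orth_sqr // VV0 mulr0.
apply/ffunP => T; rewrite !ffunE /hodge_sign.
rewrite -(det_stackmx_basis_rowsC e W (S := ksubC e T)) //.
by apply: (mulIf a0); rewrite det_stackmx_basis_rows // mulrAC divfK.
Qed.

Lemma smass_hodge k m n (e : (k + m = n)%N) (c : R)
    (W : 'M[R]_(k, n)) (V : 'M[R]_(m, n)) :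
  W *m V^T = 0 -> \det (stackmx e W V) != 0 ->
  smass (c * (\det (W *m W^T) / \det (stackmx e W V))) V = smass c W.
Proof.
move=> WV; set a := \det _ => a0; rewrite /smass normrM -mulrA; congr (_ * _).
have := det_stackmx_orth_sqr e WV; rewrite -/a.
set g := \det (W *m W^T); set h := \det (V *m V^T) => agh.
have gh0 : g * h != 0 by rewrite -agh expf_neq0.
have g_ge0 : 0 <= g := gram_det_ge0 W; have h_ge0 : 0 <= h := gram_det_ge0 V.
apply/eqP; rewrite -(@eqrXn2 _ 2) ?mulr_ge0 ?sqrtr_ge0 //.
rewrite exprMn !sqr_sqrtr // real_normK ?num_real // expr_div_n agh.
by apply/eqP; field; move: gh0; rewrite mulf_eq0 negb_or andbC.
Qed.

Lemma hodge_simple k m n (e : (k + m = n)%N) (c : R) (W : 'M[R]_(k, n)) :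
  c *: wedge W != 0 -> exists d (V : 'M[R]_(m, n)),
    [/\ hodge e (c *: wedge W) = d *: wedge V, W *m V^T = 0,
        smass d V = smass c W & 0 < c * d * \det (stackmx e W V)].
Proof.
move=> /scale_wedge_neq0 [c0 Wfree].
have [V WV Vfree] := exists_orthocomplement e Wfree.
have a0 := det_stackmx_orth_neq0 e Wfree Vfree WV.
set g := \det (W *m W^T); set a := \det (stackmx e W V) in a0 *.
exists (c * (g / a)), V; split => //.
- by rewrite linearZ /= (hodge_wedge WV a0) scalerA.
- exact: smass_hodge.
- have -> : c * (c * (g / a)) * a = c ^+ 2 * g by field.
  by rewrite mulr_gt0 ?gram_det_gt0 // lt_def sqrf_eq0 c0 sqr_ge0.
Qed.

Lemma hodge_simple_mass k m n (e : (k + m = n)%N) :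
  simple_mass_preserving (hodge (R := R) e).
Proof. by move=> c W /(hodge_simple e) [d [V [? _ ? _]]]; exists d, V. Qed.

Lemma hodge_inv_simple_mass k m n (e : (k + m = n)%N) (e' : (m + k = n)%N) :
  simple_mass_preserving (hodge_inv (R := R) e e').
Proof.
move=> d V /scale_wedge_neq0 [d0 Vfree].
have [W VW Wfree] := exists_orthocomplement e' Vfree.
have WV := mulmx_tr_eq0C VW.
have a0 := det_stackmx_orth_neq0 e Wfree Vfree WV.
have g0 : \det (W *m W^T) != 0 by rewrite gt_eqF ?gram_det_gt0.
set g := \det (W *m W^T) in g0 *; set a := \det (stackmx e W V) in a0 *.
set c := d * (a / g).
have dE : d = c * (g / a) by rewrite /c; field; apply/andP.
exists c, W; split; last by rewrite [in RHS]dE smass_hodge.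
by rewrite dE -scalerA -(hodge_wedge WV a0) -linearZ hodgeK.
Qed.

End SimpleVectors.

Lemma kvec_basis_decomp (R : realType) n k (x : kvec R n k) :
  x = \sum_(S : ksub n k) x S *: wedge (basis_rows R S).
Proof.
apply/ffunP => S; rewrite sum_ffunE (bigD1 S) //= big1 => [|S' S'S].
  by rewrite wedge_basis_rows !ffunE eqxx addr0 [_ *: _]mulr1.
by rewrite wedge_basis_rows !ffunE eq_sym (negbTE S'S) [_ *: _]mulr0.
Qed.

Section PerpIsHodge.
Variable R : realType.
Variables n k : nat.
Hypothesis hk : (k <= n)%N.

Lemma hodge_perp_spec : perp_spec hk (hodge (R := R) (subnKC hk)).
Proof. by split; [exact: linearP | exact: hodge_simple]. Qed.

Lemma perp_spec_simple (L : kvec R n k -> kvec R n (n - k)%N) (c : R)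
    (W : 'M[R]_(k, n)) : perp_spec hk L ->
  c *: wedge W != 0 -> L (c *: wedge W) = hodge (subnKC hk) (c *: wedge W).
Proof.
move=> [_ Lsimple] cW; have [c0 Wfree] := scale_wedge_neq0 cW.
have [d [V [-> WV smassE]]] := Lsimple c W cW; rewrite -/(stackmx _ W V).
set a := \det (stackmx _ W V) => orient.
have a0 : a != 0 by apply: contraTneq orient => ->; rewrite mulr0 ltxx.
rewrite linearZ /= (hodge_wedge WV a0) scalerA; congr (_ *: _).
set g := \det (W *m W^T); have g_gt0 : 0 < g := gram_det_gt0 Wfree.
have smass_gt0 : 0 < smass c W by rewrite mulr_gt0 ?normr_gt0 ?sqrtr_gt0.
have sqrth0 : Num.sqrt (\det (V *m V^T)) != 0.
  by apply: contraTneq smass_gt0 => h0; rewrite -smassE /smass h0 mulr0 ltxx.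
have normE : `|d| = `|c * (g / a)|.
  by apply: (mulIf sqrth0); rewrite -[LHS]/(smass d V) smassE -(smass_hodge c WV a0).
have ca0 : c * a != 0 by rewrite mulf_neq0.
have pos1 : 0 < d * (c * a) by rewrite mulrCA mulrA.
have pos2 : 0 < c * (g / a) * (c * a).
  have -> : c * (g / a) * (c * a) = c ^+ 2 * g by field.
  by rewrite mulr_gt0 // lt_def sqrf_eq0 c0 sqr_ge0.
apply: (mulIf ca0); rewrite -[LHS]gtr0_norm // -[RHS]gtr0_norm //.
by rewrite (normrM d) (normrM (c * (g / a))) normE.
Qed.

Lemma perp_spec_unique (L : kvec R n k -> kvec R n (n - k)%N) :
  perp_spec hk L -> L =1 hodge (subnKC hk).
Proof.
move=> Lspec; have [Llin _] := Lspec.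
pose L' : {linear kvec R n k -> kvec R n (n - k)%N} :=
  HB.pack L (GRing.isLinear.Build _ _ _ _ L Llin).
have -> : L = L' by [].
move=> x; rewrite (kvec_basis_decomp x) !linear_sum; apply: eq_bigr => S _.
rewrite !linearZ /= -[wedge _]scale1r; congr (_ *: _); apply: perp_spec_simple => //.
rewrite scale1r wedge_basis_rows.
by apply/eqP => /ffunP /(_ S) /eqP; rewrite !ffunE eqxx oner_eq0.
Qed.

Lemma perpE : perp (R := R) hk = hodge (subnKC hk).
Proof.
apply/funext/perp_spec_unique.
exact: (epsilon_spec _ _ (ex_intro _ _ hodge_perp_spec)).
Qed.

End PerpIsHodge.

Definition map_chain (R : realType) n k m (L : kvec R n k -> kvec R n m)
    (P : chain R n k) : chain R n m :=
  [seq (x.1, L x.2) | x <- P].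

Definition pullback (R : realType) n k m (L : kvec R n k -> kvec R n m)
    (w : 'rV[R]_n -> kvec R n m -> R) : 'rV[R]_n -> kvec R n k -> R :=
  fun p x => w p (L x).

Section Pullback.
Variable R : realType.
Variables n k m : nat.
Implicit Types (L : kvec R n k -> kvec R n m) (w : 'rV[R]_n -> kvec R n m -> R).

Lemma DeltaU_map_chain L U P : {morph L : x / - x} ->
  DeltaU U (map_chain L P) = map_chain L (DeltaU U P).
Proof.
move=> LN; elim: U => [//|u U IH] /=; rewrite IH /Delta /map_chain map_cat -!map_comp.
by congr (_ ++ _); apply: eq_map => x /=; rewrite LN.
Qed.

Lemma eval_map_chain w L P : Defs.eval w (map_chain L P) = Defs.eval (pullback L w) P.
Proof. by rewrite /Defs.eval big_map. Qed.

Lemma pullback_is_form w (L : {linear kvec R n k -> kvec R n m}) :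
  is_form w -> is_form (pullback L w).
Proof. by move=> wform p a x y; rewrite /pullback linearP wform. Qed.

End Pullback.

Section NormBounds.
Variable R : realType.
Variables n k : nat.
Implicit Type w : 'rV[R]_n -> kvec R n k -> R.

Lemma eval_DeltaU_0 w U p : is_form w -> Defs.eval w (DeltaU U [:: (p, 0)]) = 0.
Proof.
move=> wform; have w0 q : w q 0 = 0.
  by have := wform q (-1) 0 0; rewrite scaler0 addr0 mulN1r addNr.
have : all (fun x => x.2 == 0) (DeltaU U [:: (p, 0 : kvec R n k)]).
  elim: U => [|u U IH] /=; first by rewrite eqxx.
  by rewrite /Delta all_cat !all_map; apply/andP; split;
    apply: sub_all IH => x /= /eqP ->; rewrite ?oppr0.
move=> /allP U0; rewrite /Defs.eval big1_seq // => x /andP[_ /U0 /eqP ->].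
exact: w0.
Qed.

Lemma normj_ge0 w (U : seq 'rV[R]_n) (p : 'rV[R]_n) :
  (k <= n)%N -> \prod_(u <- U) enorm u != 0 -> (0 <= normj w (size U))%E.
Proof.
move=> hk U0; set c := (\prod_(u <- U) enorm u)^-1.
pose e1 : kvec R n k := c *: wedge (pid_mx k : 'M[R]_(k, n)).
pose z := (`| Defs.eval w (DeltaU U [:: (p, e1)]) |)%:E.
have /le_trans : (0 <= z)%E by rewrite lee_fin.
apply; apply: ereal_sup_ubound; exists U, p, c, (pid_mx k); split => //.
rewrite /smass tr_pid_mx pid_mx_id // pid_mx_1 det1 sqrtr1 mulr1.
by rewrite ger0_norm ?mulfV // invr_ge0 prodr_ge0 // => u _; rewrite sqrtr_ge0.
Qed.

End NormBounds.

Lemma normj_pullback_le (R : realType) n k m (L : {linear kvec R n k -> kvec R n m})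
    (w : 'rV[R]_n -> kvec R n m -> R) j :
  (m <= n)%N -> simple_mass_preserving L -> is_form w ->
  (normj (pullback L w) j <= normj w j)%E.
Proof.
move=> hm Lmass wform; apply: ge_ereal_sup => _ [U [p [c [W [<- mass1 ->]]]]].
have -> : Defs.eval (pullback L w) (DeltaU U [:: (p, c *: wedge W)]) =
    Defs.eval w (DeltaU U [:: (p, L (c *: wedge W))]).
  by rewrite -eval_map_chain -DeltaU_map_chain //; exact: linearN.
have [-> | cW] := eqVneq (c *: wedge W) 0.
  (* the null vector has value 0, below any admissible value for [w] *)
  rewrite linear0 eval_DeltaU_0 // normr0; apply: (normj_ge0 _ p hm).
  by apply: contra_eq_neq mass1 => ->; rewrite mul0r eq_sym oner_neq0.
have [d [V [-> smassE]]] := Lmass c W cW.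
by apply: ereal_sup_ubound; exists U, p, d, V; rewrite smassE.
Qed.

Section Invariance.
Variable R : realType.
Variables n k m : nat.
Hypotheses (hk : (k <= n)%N) (hm : (m <= n)%N).
Variable L : {linear kvec R n k -> kvec R n m}.
Variable Li : {linear kvec R n m -> kvec R n k}.
Hypotheses (LK : cancel L Li) (LiK : cancel Li L).
Hypotheses (Lmass : simple_mass_preserving L) (Limass : simple_mass_preserving Li).

Lemma pullbackK (w : 'rV[R]_n -> kvec R n m -> R) : pullback Li (pullback L w) = w.
Proof. by apply/funext => p; apply/funext => y; rewrite /pullback LiK. Qed.

Lemma pullback_invK (v : 'rV[R]_n -> kvec R n k -> R) : pullback L (pullback Li v) = v.
Proof. by apply/funext => p; apply/funext => x; rewrite /pullback LK. Qed.

Lemma normj_pullback w j : is_form w -> normj (pullback L w) j = normj w j.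
Proof.
move=> wform; apply/le_anti/andP; split; first exact: normj_pullback_le.
rewrite -{1}(pullbackK w); apply: normj_pullback_le => //.
exact: pullback_is_form.
Qed.

Lemma natnorm_form_pullback r w :
  is_form w -> natnorm_form r (pullback L w) = natnorm_form r w.
Proof. by move=> wform; apply: eq_bigr => j _; rewrite normj_pullback. Qed.

Lemma natnorm_chain_map r (P : chain R n k) :
  natnorm_chain r (map_chain L P) = natnorm_chain r P.
Proof.
rewrite /natnorm_chain; congr ereal_sup.
apply/seteqP; split => _ [w [wform w0 wfin ->]].
  exists (pullback L w); rewrite eval_map_chain natnorm_form_pullback //; split => //.
    exact: pullback_is_form.
  by apply: contra_not w0 => Lw0; rewrite -(pullbackK w) Lw0.
have wform' := pullback_is_form Li wform.
exists (pullback Li w).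
rewrite eval_map_chain -(natnorm_form_pullback r wform') pullback_invK.
by split => //; apply: contra_not w0 => Liw0; rewrite -(pullback_invK w) Liw0.
Qed.

End Invariance.

Theorem mainTheorem8 (R : realType) (n k r : nat) (hk : (k <= n)%N)
  (P : chain R n k) :
  natnorm_chain r (perp_chain hk P) = natnorm_chain r P.
Proof.
rewrite -[perp_chain hk P]/(map_chain (perp hk) P) perpE.
apply: (natnorm_chain_map hk (leq_subr k n) (hodgeK _ (subnK hk)) (hodge_invK _ _)).
  exact: hodge_simple_mass.
exact: hodge_inv_simple_mass.
Qed.
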